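(* Let $T_1,T_2$ be rooted trees in which every leaf of $T_i$ has depth $h_i$. A prefix is a pair $p=(p_1,p_2)$ with $p_i$ a node of $T_i$; it is fully specified if both $p_1,p_2$ are leaves. Write $e\preceq p$ if for each $i$, $p_i$ is an ancestor of or equal to $e_i$, and $e\prec p$ if $e\preceq p$ and $e\ne p$. For a finite nonempty set $X$ of prefixes, if for each $i$ the nodes $\{x_i:x\in X\}$ are pairwise comparable in $T_i$ (each is an ancestor of or equal to the other), let $\mathrm{glb}(X)$ be the prefix whose $i$-th coordinate is the deepest of these nodes; otherwise $\mathrm{glb}(X)$ is undefined (a trivial item, contributing count $0$). Let $S$ be a finite multiset of fully specified elements, $f(e)$ the multiplicity of $e$, $f(p)=\sum_{e\in S,\,e\preceq p}f(e)$ for a prefix $p$. Let $P$ be any set of prefixes and $p$ a prefix; set $P_p=\{q\in P:q\prec p\}$, $F_p=\sum f(e)$ over fully specified $e\preceq p$ with $e\not\preceq q$ for all $q\in P_p$, and $H_p=\{h\in P: h\prec p,\ \nexists h'\in P \text{ with } h\prec h'\prec p\}$. Let $T_p$ be the set of prefixes $q$ such that $q=\mathrm{glb}(\{h,h'\})$ for some two distinct $h,h'\in H_p$, but $q$ is not equal to $\mathrm{glb}(X)$ for any $X\subseteq H_p$ with $|X|\ge 3$. Then $$F_p=f(p)-\sum_{q\in H_p}f(q)+\sum_{q\in T_p}f(q).$$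
   Context: Two-dimensional hierarchical setting (e.g. source/destination IP address pairs, each coordinate generalized by wildcarding trailing bytes). $f(p)$ is the unconditioned count and $F_p$ the conditioned count of $p$ with respect to $P$. *)

From mathcomp Require Import all_boot all_order all_algebra.
Set Implicit Arguments. Unset Strict Implicit. Unset Printing Implicit Defensive.

Definition rooted_tree (V : finType) (r : V) (par : V -> V) : Prop :=
  par r = r /\ forall v : V, exists k, iter k par v = r.

(* [anc par u v]: u is an ancestor of, or equal to, v.  The bound #|V| on
   the number of parent steps is harmless (any ancestor is reached in fewer
   than #|V| steps). *)
Definition anc (V : finType) (par : V -> V) (u v : V) : bool :=
  [exists k : 'I_#|V|.+1, iter k par v == u].

Definition comparable (V : finType) (par : V -> V) (u v : V) : bool :=
  anc par u v || anc par v u.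

Definition is_leaf (V : finType) (par : V -> V) (v : V) : bool :=
  [forall w, (par w == v) ==> (w == v)].

Definition has_depth (V : finType) (r : V) (par : V -> V) (v : V) (h : nat) : Prop :=
  iter h par v = r /\ forall k, k < h -> iter k par v <> r.

Section Prefixes.
Variables (V1 V2 : finType) (par1 : V1 -> V1) (par2 : V2 -> V2).

Definition pre (e p : V1 * V2) : bool := anc par1 p.1 e.1 && anc par2 p.2 e.2.
Definition prec (e p : V1 * V2) : bool := pre e p && (e != p).

Definition fully (e : V1 * V2) : bool := is_leaf par1 e.1 && is_leaf par2 e.2.

(* [glb_is X q] : glb(X) is defined and equals q. *)
Definition glb_is (X : {set V1 * V2}) (q : V1 * V2) : bool :=
  [&& X != set0,
      [forall x in X, forall y in X,
         comparable par1 x.1 y.1 && comparable par2 x.2 y.2],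
      [exists x in X, x.1 == q.1],
      [exists x in X, x.2 == q.2] &
      [forall x in X, anc par1 x.1 q.1 && anc par2 x.2 q.2]].

Definition fcount (f : V1 * V2 -> nat) (p : V1 * V2) : nat :=
  \sum_(e | pre e p) f e.

Definition Pset (P : {set V1 * V2}) (p : V1 * V2) : {set V1 * V2} :=
  [set q in P | prec q p].

Definition Fcond (f : V1 * V2 -> nat) (P : {set V1 * V2}) (p : V1 * V2) : nat :=
  \sum_(e | [&& fully e, pre e p & [forall q in Pset P p, ~~ pre e q]]) f e.

Definition Hset (P : {set V1 * V2}) (p : V1 * V2) : {set V1 * V2} :=
  [set h in P | prec h p && ~~ [exists h', (h' \in P) && prec h h' && prec h' p]].

Definition Tset (P : {set V1 * V2}) (p : V1 * V2) : {set V1 * V2} :=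
  [set q | [exists h in Hset P p, exists h' in Hset P p,
              (h != h') && glb_is [set h; h'] q]
           && ~~ [exists X : {set V1 * V2},
                    [&& X \subset Hset P p, 2 < #|X| & glb_is X q]]].

End Prefixes.

(* Both sides are sums over elements [e] of [f e] times a count, so it suffices
   to compare the counts for a fixed fully specified [e].  Let [A] be the set of
   elements of [H_p] above [e].  Elements of [H_p] are pairwise incomparable,
   while the coordinates of elements above [e] lie on the chains of ancestors
   of [e]; hence, ordering [A] by depth in the first tree orders it backwards
   by depth in the second.  The glb of a subset of [A] takes its first
   coordinate from the member deepest in the first tree and its second from the
   shallowest one, so a pairwise glb is also the glb of a larger subset exactly
   when some member of [A] lies strictly between the pair: the elements of
   [T_p] above [e] correspond to consecutive pairs of [A], of which there are
   [#|A| - 1] when [A] is nonempty.  If [A] is empty, [e] is counted in [F_p]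
   iff [e <= p], since every [q] in [P_p] lies below some element of [H_p]; if
   [A] is nonempty, [e <= p] but [e] is not counted.  In both cases
   [[e counted in F_p] + #|A| = [e <= p] + #|T_p above e|]. *)

From Pilot Require Import Defs.
From mathcomp Require Import all_boot all_order all_algebra.
Import Defs. (* [all_order] shadows [comparable]. *)
Set Implicit Arguments. Unset Strict Implicit. Unset Printing Implicit Defensive.

Section RootedTree.
Variables (V : finType) (r : V) (par : V -> V).
Hypothesis T : rooted_tree r par.

Lemma iter_par_root n : iter n par r = r.
Proof. by apply: iter_fix; case: T. Qed.

(* Every vertex reaches the root, so the only cycle of [par] is the loop at the root. *)
Lemma iter_par_loop v i j :
  i < j -> iter i par v = iter j par v -> iter i par v = r.
Proof.
move=> lt_ij eq_ij; set w := iter i par v.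
have w_loop : iter (j - i) par w = w by rewrite /w -iterD subnK // ltnW.
have w_loopM m : iter (m * (j - i)) par w = w.
  by elim: m => [|m IHm] //=; rewrite mulSn iterD IHm w_loop.
case: T => _ /(_ w) [k w_root].
have le_k : k <= k * (j - i) by rewrite leq_pmulr // subn_gt0.
by rewrite -(w_loopM k) -(subnK le_k) iterD w_root iter_par_root.
Qed.

Lemma ancP u v : reflect (exists n, iter n par v = u) (anc par u v).
Proof.
apply: (iffP existsP) => [[k /eqP <-]|[n vn]]; first by exists k.
have [small|big] := leqP n #|V|.
  by exists (Ordinal (n := #|V|.+1) small); apply/eqP.
pose g (k : 'I_#|V|.+1) := iter k par v.
have /injectivePn [x [y neq_xy gxy]] : ~~ injectiveb g.
  by apply/negP => /injectiveP /leq_card; rewrite card_ord ltnn.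
have {x y neq_xy gxy} [x [y [lt_xy gxy]]] : exists x y : 'I_#|V|.+1, x < y /\ g x = g y.
  by move: neq_xy; rewrite neq_ltn => /orP[lt|lt]; [exists x, y | exists y, x].
have x_root := iter_par_loop lt_xy gxy.
have le_xn : x <= n by apply: leq_trans (ltnW big); rewrite -ltnS.
exists x; apply/eqP; rewrite /= x_root -vn.
by rewrite -(subnK le_xn) iterD x_root iter_par_root.
Qed.

Lemma anc_refl u : anc par u u.
Proof. by apply/existsP; exists ord0. Qed.

Lemma anc_trans u v w : anc par u v -> anc par v w -> anc par u w.
Proof. by move=> /ancP[a <-] /ancP[b <-]; apply/ancP; exists (a + b); rewrite iterD. Qed.

Lemma anc_antisym u v : anc par u v -> anc par v u -> u = v.
Proof.
move=> /ancP[a va] /ancP[b ub].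
have [|ab_gt0] := posnP (a + b).
  by move/eqP; rewrite addn_eq0 => /andP[/eqP a0 _]; rewrite -va a0.
have v_loop : iter 0 par v = iter (a + b) par v by rewrite addnC iterD va ub.
have /= v_root := iter_par_loop ab_gt0 v_loop.
by rewrite -va v_root iter_par_root.
Qed.

Lemma anc_comparable u v w : anc par u w -> anc par v w -> comparable par u v.
Proof.
move=> /ancP[a wa] /ancP[b wb]; rewrite /comparable.
have [le_ab|lt_ba] := leqP a b.
  by apply/orP; right; apply/ancP; exists (b - a); rewrite -wa -iterD subnK.
by apply/orP; left; apply/ancP; exists (a - b); rewrite -wb -iterD subnK // ltnW.
Qed.

(* The depth of [v] plus one. *)
Definition nanc (v : V) := #|[set u | anc par u v]|.

Lemma nanc_le u v : anc par u v -> nanc u <= nanc v.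
Proof.
move=> uv; apply/subset_leq_card/subsetP => x; rewrite !inE => xu.
exact: anc_trans xu uv.
Qed.

Lemma nanc_lt u v : anc par u v -> u != v -> nanc u < nanc v.
Proof.
move=> uv neq_uv; apply/proper_card/properP; split.
  by apply/subsetP => x; rewrite !inE => xu; apply: anc_trans xu uv.
exists v; rewrite !inE ?anc_refl //.
by apply: contra neq_uv => vu; apply/eqP/anc_antisym.
Qed.

Lemma comparable_nanc_anc u v : comparable par u v -> nanc u <= nanc v -> anc par u v.
Proof.
case/orP => // vu le_uv; have [->|neq_vu] := eqVneq v u; first exact: anc_refl.
by have := nanc_lt vu neq_vu; rewrite ltnNge le_uv.
Qed.

Lemma comparable_nanc_inj u v : comparable par u v -> nanc u = nanc v -> u = v.
Proof.
move=> cmp_uv eq_uv; apply: anc_antisym; apply: comparable_nanc_anc; rewrite ?eq_uv //.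
by rewrite /comparable orbC.
Qed.

End RootedTree.

Section Prefixes.
Variables (V1 V2 : finType) (r1 : V1) (r2 : V2) (par1 : V1 -> V1) (par2 : V2 -> V2).
Hypotheses (T1 : rooted_tree r1 par1) (T2 : rooted_tree r2 par2).

Local Notation pre := (pre par1 par2).
Local Notation prec := (prec par1 par2).
Local Notation glb_is := (glb_is par1 par2).
Local Notation nanc1 x := (nanc par1 x.1).
Local Notation nanc2 x := (nanc par2 x.2).

Lemma pre_refl x : pre x x.
Proof. by rewrite /pre !anc_refl. Qed.

Lemma pre_trans x y z : pre x y -> pre y z -> pre x z.
Proof.
move=> /andP[xy1 xy2] /andP[yz1 yz2].
by rewrite /pre (anc_trans T1 yz1 xy1) (anc_trans T2 yz2 xy2).
Qed.

Lemma prec_nanc x y : prec x y -> nanc1 y + nanc2 y < nanc1 x + nanc2 x.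
Proof.
case/andP=> /andP[yx1 yx2] neq_xy; have [E1|ne1] := eqVneq y.1 x.1.
  have ne2 : y.2 != x.2.
    by apply: contraNneq neq_xy => E2; apply/eqP/esym; apply: injective_projections.
  by rewrite E1 ltn_add2l (nanc_lt T2 yx2 ne2).
by rewrite -addSn; apply: leq_add (nanc_lt T1 yx1 ne1) (nanc_le T2 yx2).
Qed.

Lemma glb_is_pre (X : {set V1 * V2}) q x : glb_is X q -> x \in X -> pre q x.
Proof. by case/and5P=> _ _ _ _ /forallP/(_ x)/implyP. Qed.

Variables (P : {set V1 * V2}) (p : V1 * V2).
Local Notation H := (Hset par1 par2 P p).

Lemma mem_Hset h : h \in H -> h \in P /\ prec h p.
Proof. by rewrite inE => /andP[-> /andP[->]]. Qed.

Lemma Hset_pre_eq h h' : h \in H -> h' \in H -> pre h h' -> h = h'.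
Proof.
move=> hH h'H hh'; apply/eqP/negPn/negP => neq_hh'.
move: hH; rewrite inE => /andP[_ /andP[_ /existsP]]; apply; exists h'.
by have [-> ->] := mem_Hset h'H; rewrite /prec hh' neq_hh'.
Qed.

Lemma Hset_above q : q \in P -> prec q p -> exists2 h, h \in H & pre q h.
Proof.
move=> qP qp; pose S := [set h in P | pre q h && prec h p].
have qS : q \in S by rewrite inE qP pre_refl qp.
case: (arg_minnP (fun h => nanc1 h + nanc2 h) qS) => h hS h_min.
have : h \in S := hS; rewrite inE => /and3P[hP qh hp].
exists h => //; rewrite inE hP hp /=.
apply/existsP => -[h' /andP[/andP[h'P hh'] h'p]].
have h'S : h' \in S by rewrite inE h'P h'p (pre_trans qh) //; case/andP: hh'.
by have := h_min h' h'S; rewrite leqNgt prec_nanc.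
Qed.

Section AboveElement.
Variable e : V1 * V2.
Local Notation A := [set h in H | pre e h].

Lemma mem_above h : h \in A -> h \in H /\ pre e h.
Proof. by rewrite inE => /andP. Qed.

Lemma above_comparable x y :
  x \in A -> y \in A -> comparable par1 x.1 y.1 /\ comparable par2 x.2 y.2.
Proof.
move=> /mem_above[_ /andP[ex1 ex2]] /mem_above[_ /andP[ey1 ey2]].
by split; [exact: (anc_comparable T1 ex1 ey1) | exact: (anc_comparable T2 ex2 ey2)].
Qed.

Lemma above_anc1 x y : x \in A -> y \in A -> nanc1 x <= nanc1 y -> anc par1 x.1 y.1.
Proof.
by move=> xA yA; case: (above_comparable xA yA) => c1 _; apply: (comparable_nanc_anc T1 c1).
Qed.

Lemma above_anc2 x y : x \in A -> y \in A -> nanc2 x <= nanc2 y -> anc par2 x.2 y.2.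
Proof.
by move=> xA yA; case: (above_comparable xA yA) => _ c2; apply: (comparable_nanc_anc T2 c2).
Qed.

Lemma above_inj1 x y : x \in A -> y \in A -> x.1 = y.1 -> x = y.
Proof.
move=> xA yA E1; have [xH _] := mem_above xA; have [yH _] := mem_above yA.
have [_ /orP[xy2|yx2]] := above_comparable xA yA.
  by apply/esym/(Hset_pre_eq yH xH); rewrite /pre E1 anc_refl.
by apply: (Hset_pre_eq xH yH); rewrite /pre E1 anc_refl.
Qed.

Lemma above_inj2 x y : x \in A -> y \in A -> x.2 = y.2 -> x = y.
Proof.
move=> xA yA E2; have [xH _] := mem_above xA; have [yH _] := mem_above yA.
have [/orP[xy1|yx1] _] := above_comparable xA yA.
  by apply/esym/(Hset_pre_eq yH xH); rewrite /pre E2 anc_refl andbT.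
by apply: (Hset_pre_eq xH yH); rewrite /pre E2 anc_refl andbT.
Qed.

Lemma above_nanc_inj1 x y : x \in A -> y \in A -> nanc1 x = nanc1 y -> x = y.
Proof.
move=> xA yA E; have [c1 _] := above_comparable xA yA.
exact: above_inj1 xA yA (comparable_nanc_inj T1 c1 E).
Qed.

Lemma above_nanc_inj2 x y : x \in A -> y \in A -> nanc2 x = nanc2 y -> x = y.
Proof.
move=> xA yA E; have [_ c2] := above_comparable xA yA.
exact: above_inj2 xA yA (comparable_nanc_inj T2 c2 E).
Qed.

Lemma above_nanc_ltr x y : x \in A -> y \in A -> nanc1 x < nanc1 y -> nanc2 y < nanc2 x.
Proof.
move=> xA yA lt_xy; rewrite ltnNge; apply/negP => le_xy.
have [xH _] := mem_above xA; have [yH _] := mem_above yA.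
have yx : pre y x by rewrite /pre (above_anc1 xA yA (ltnW lt_xy)) (above_anc2 xA yA le_xy).
by move: lt_xy; rewrite (Hset_pre_eq yH xH yx) ltnn.
Qed.

Lemma above_nanc_ler x y : x \in A -> y \in A -> nanc1 x <= nanc1 y -> nanc2 y <= nanc2 x.
Proof.
move=> xA yA; rewrite leq_eqVlt => /orP[/eqP/(above_nanc_inj1 xA yA)-> //|lt_xy].
exact/ltnW/above_nanc_ltr.
Qed.

Lemma glb_is_above (X : {set V1 * V2}) q : X \subset H -> pre e q -> glb_is X q -> X \subset A.
Proof.
move=> /subsetP XH e_q X_q; apply/subsetP => x xX.
by rewrite inE XH //= (pre_trans e_q (glb_is_pre X_q xX)).
Qed.

Lemma glb_is_span (X : {set V1 * V2}) x y q : X \subset A -> x \in X -> y \in X ->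
    (forall w, w \in X -> nanc1 x <= nanc1 w <= nanc1 y) ->
  glb_is X q = (q == (y.1, x.2)).
Proof.
move=> /subsetP XA xX yX bounds.
have xA := XA x xX; have yA := XA y yX.
apply/idP/eqP => [X_q|->].
  case/and5P: (X_q) => _ _ /existsP[a /andP[aX /eqP aq]] /existsP[b /andP[bX /eqP bq]] _.
  have aA := XA a aX; have bA := XA b bX.
  have /andP[yq _] := glb_is_pre X_q yX; have /andP[_ xq] := glb_is_pre X_q xX.
  have /andP[_ le_ay] := bounds a aX; have /andP[le_xb _] := bounds b bX.
  have ay : a = y.
    by apply: above_nanc_inj1 => //; apply/anti_leq; rewrite le_ay aq (nanc_le T1 yq).
  have bx : b = x.
    apply: above_nanc_inj2 => //; apply/anti_leq.
    by rewrite (above_nanc_ler xA bA le_xb) bq (nanc_le T2 xq).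
  by rewrite -ay -bx aq bq -surjective_pairing.
apply/and5P; split.
- by apply/set0Pn; exists x.
- apply/forallP => u; apply/implyP => uX; apply/forallP => v; apply/implyP => vX.
  by have [-> ->] := above_comparable (XA u uX) (XA v vX).
- by apply/existsP; exists y; rewrite yX eqxx.
- by apply/existsP; exists x; rewrite xX eqxx.
apply/forallP => w; apply/implyP => wX /=; have wA := XA w wX.
have /andP[le_xw le_wy] := bounds w wX.
by rewrite (above_anc1 wA yA le_wy) (above_anc2 wA xA (above_nanc_ler xA wA le_xw)).
Qed.

Lemma glb_is_pair x y q : x \in A -> y \in A -> nanc1 x < nanc1 y ->
  glb_is [set x; y] q = (q == (y.1, x.2)).
Proof.
move=> xA yA lt_xy; apply: glb_is_span; rewrite ?in_set2 ?eqxx ?orbT //.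
  by apply/subsetP => w; rewrite in_set2 => /orP[] /eqP->.
move=> w; rewrite in_set2 => /orP[] /eqP->.
- by rewrite leqnn (ltnW lt_xy).
by rewrite (ltnW lt_xy) leqnn.
Qed.

Lemma glb_is_triple x y z : x \in A -> y \in A -> z \in A ->
  nanc1 x < nanc1 z < nanc1 y -> glb_is [set x; y; z] (y.1, x.2).
Proof.
move=> xA yA zA /andP[lt_xz lt_zy]; have lt_xy := ltn_trans lt_xz lt_zy.
have memX w : w \in [set x; y; z] = [|| w == x, w == y | w == z].
  by rewrite !in_setU !in_set1 -orbA.
rewrite (glb_is_span (x := x) (y := y)).
- exact: eqxx.
- by apply/subsetP => w; rewrite memX => /or3P[] /eqP->.
- by rewrite memX eqxx.
- by rewrite memX eqxx orbT.
move=> w; rewrite memX => /or3P[] /eqP->.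
- by rewrite leqnn (ltnW lt_xy).
- by rewrite (ltnW lt_xy) leqnn.
by rewrite (ltnW lt_xz) (ltnW lt_zy).
Qed.

Lemma glb_is_between (X : {set V1 * V2}) x y : X \subset A -> 2 < #|X| -> x \in A -> y \in A ->
    nanc1 x < nanc1 y -> glb_is X (y.1, x.2) ->
  exists2 z, z \in A & nanc1 x < nanc1 z < nanc1 y.
Proof.
move=> /subsetP XA X_gt2 xA yA lt_xy X_q.
have /subsetPn[z zX] : ~~ (X \subset [set x; y]).
  apply: contraL X_gt2 => /subset_leq_card; rewrite cards2 -leqNgt => le_X.
  by apply: leq_trans le_X _; case: (_ != _).
rewrite in_set2 negb_or => /andP[neq_zx neq_zy]; have zA := XA z zX.
have /andP[zy zx] := glb_is_pre X_q zX.
exists z => //; apply/andP; split.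
  rewrite ltnNge; apply: contra neq_zx => le_zx; apply/eqP/above_nanc_inj2 => //.
  by apply/anti_leq; rewrite (above_nanc_ler zA xA le_zx) (nanc_le T2 zx).
rewrite ltn_neqAle (nanc_le T1 zy) andbT.
by apply: contra neq_zy => /eqP/(above_nanc_inj1 zA yA)->.
Qed.

Definition consecutive x y :=
  [&& x \in A, y \in A, nanc1 x < nanc1 y
    & [forall z in A, ~~ (nanc1 x < nanc1 z < nanc1 y)]].

Lemma mem_Tset_above q : pre e q ->
  (q \in Tset par1 par2 P p) = [exists x, exists y, consecutive x y && (q == (y.1, x.2))].
Proof.
move=> e_q; apply/idP/idP.
  rewrite inE => /andP[/existsP[h /andP[hH /existsP[h' /andP[h'H /andP[neq_hh' hh'_q]]]]] noX].
  have sub_hh' : [set h; h'] \subset H by apply/subsetP => w /set2P[]->.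
  have /subsetP hh'A := glb_is_above sub_hh' e_q hh'_q.
  have hA := hh'A h (set21 h h'); have h'A := hh'A h' (set22 h h').
  suff consec x y : x \in A -> y \in A -> nanc1 x < nanc1 y -> glb_is [set x; y] q ->
      consecutive x y && (q == (y.1, x.2)).
    have [lt|lt|eq1] := ltngtP (nanc1 h) (nanc1 h').
    - by apply/existsP; exists h; apply/existsP; exists h'; apply: consec.
    - by apply/existsP; exists h'; apply/existsP; exists h; rewrite consec // setUC.
    by move: neq_hh'; rewrite (above_nanc_inj1 hA h'A eq1) eqxx.
  move=> xA yA lt_xy; rewrite glb_is_pair // => /eqP q_xy; rewrite q_xy eqxx andbT.
  rewrite /consecutive xA yA lt_xy; apply/forall_inP => z zA; apply/negP => btw.
  move: noX => /existsP; apply; exists [set x; y; z]; apply/and3P; split.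
  - by apply/subsetP => w; rewrite !in_setU !in_set1 => /orP[/orP[]|] /eqP->;
      apply: (proj1 (mem_above _)).
  - have /andP[lt_xz lt_zy] := btw.
    have neq (u v : V1 * V2) : nanc1 u < nanc1 v -> u != v.
      by apply: contraTneq => ->; rewrite ltnn.
    rewrite setUC cardsU1 cards2 in_set2 negb_or eq_sym (neq _ _ lt_xz).
    by rewrite (neq _ _ lt_zy) (neq _ _ lt_xy).
  by rewrite q_xy glb_is_triple.
case/existsP => x /existsP[y /andP[/and4P[xA yA lt_xy noz] /eqP q_xy]]; subst q.
have [xH _] := mem_above xA; have [yH _] := mem_above yA.
rewrite inE; apply/andP; split.
  apply/existsP; exists x; rewrite xH; apply/existsP; exists y; rewrite yH.
  rewrite glb_is_pair // eqxx andbT.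
  by apply: contraTneq lt_xy => ->; rewrite ltnn.
apply/negP => /existsP[X /and3P[XH X_gt2 X_q]].
have [z zA btw] := glb_is_between (glb_is_above XH e_q X_q) X_gt2 xA yA lt_xy X_q.
by move/forall_inP: noz => /(_ z zA); rewrite btw.
Qed.

Lemma consecutive_uniq x x' y : consecutive x y -> consecutive x' y -> x = x'.
Proof.
move=> /and4P[xA _ lt_xy /forall_inP nox] /and4P[x'A _ lt_x'y /forall_inP nox'].
have [lt|lt|eq1] := ltngtP (nanc1 x) (nanc1 x'); last exact: above_nanc_inj1.
  by have := nox x' x'A; rewrite lt lt_x'y.
by have := nox' x xA; rewrite lt lt_xy.
Qed.

Section Enumeration.
Variable h0 : V1 * V2.
Hypothesis h0A : h0 \in A.

Let m := [arg min_(x < h0 in A) nanc1 x].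
Let pred (y : V1 * V2) := [arg max_(x > m in [set x in A | nanc1 x < nanc1 y]) nanc1 x].

Lemma min_above : m \in A /\ forall x, x \in A -> nanc1 m <= nanc1 x.
Proof. by rewrite /m; case: arg_minnP. Qed.

Lemma consecutive_pred y : y \in A -> y != m -> consecutive (pred y) y.
Proof.
move=> yA neq_ym; have [mA m_min] := min_above.
have mC : m \in [set x in A | nanc1 x < nanc1 y].
  rewrite inE mA ltn_neqAle m_min // andbT.
  by apply: contra neq_ym => /eqP/(above_nanc_inj1 mA yA)->.
rewrite /pred; case: arg_maxnP => // z; rewrite inE => /andP[zA lt_zy] z_max.
rewrite /consecutive zA yA lt_zy; apply/forall_inP => x xA; apply/negP => /andP[lt_zx lt_xy].
have /z_max : x \in [set x in A | nanc1 x < nanc1 y] by rewrite inE xA lt_xy.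
by rewrite /= leqNgt lt_zx.
Qed.

Lemma Tset_above_image :
  [set q in Tset par1 par2 P p | pre e q] = [set (y.1, (pred y).2) | y in A :\ m].
Proof.
apply/setP => q; rewrite inE; apply/idP/imsetP => [/andP[qT e_q]|[y]].
  move: qT; rewrite mem_Tset_above // => /existsP[x /existsP[y /andP[xy /eqP->]]].
  have [xA yA lt_xy _] := and4P xy.
  have neq_ym : y != m.
    by apply: contraTneq lt_xy => ->; rewrite -leqNgt (proj2 min_above).
  by exists y; rewrite ?in_setD1 ?neq_ym // (consecutive_uniq xy (consecutive_pred yA neq_ym)).
rewrite in_setD1 => /andP[neq_ym yA] ->; have cons := consecutive_pred yA neq_ym.
have [pA _ _ _] := and4P cons.
have e_q : pre e (y.1, (pred y).2).
  by have [_ /andP[? _]] := mem_above yA; have [_ /andP[_ ?]] := mem_above pA; apply/andP.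
rewrite e_q mem_Tset_above // andbT.
by apply/existsP; exists (pred y); apply/existsP; exists y; rewrite cons eqxx.
Qed.

Lemma card_above_Tset : #|A| = #|[set q in Tset par1 par2 P p | pre e q]|.+1.
Proof.
rewrite Tset_above_image card_in_imset ?(cardsD1 m A) ?(proj1 min_above) //.
move=> y y' /[!in_setD1] /andP[_ yA] /andP[_ y'A] [E1 _].
exact: above_inj1 yA y'A E1.
Qed.

End Enumeration.

Lemma Tset_above_eq0 : A = set0 -> #|[set q in Tset par1 par2 P p | pre e q]| = 0.
Proof.
move=> A0; apply/eqP; rewrite cards_eq0; apply/eqP/setP => q; rewrite in_set0 in_set.
apply/negP => /andP[qT e_q]; move: qT; rewrite mem_Tset_above //.
by case/existsP=> x /existsP[y /andP[/and4P[xA _ _ _] _]]; rewrite A0 in_set0 in xA.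
Qed.

Lemma Fcond_pointwise : fully par1 par2 e ->
    [&& fully par1 par2 e, pre e p & [forall q in Pset par1 par2 P p, ~~ pre e q]] + #|A|
  = pre e p + #|[set q in Tset par1 par2 P p | pre e q]|.
Proof.
move=> fe; rewrite fe /=.
have [A0|/set0Pn[h hA]] := eqVneq A set0.
  rewrite A0 cards0 Tset_above_eq0 // !addn0; case: (pre e p) => //=.
  suff -> : [forall q in Pset par1 par2 P p, ~~ pre e q] by [].
  apply/forall_inP => q; rewrite inE => /andP[qP qp]; apply/negP => e_q.
  have [h hH qh] := Hset_above qP qp.
  have : h \in A by rewrite inE hH (pre_trans e_q qh).
  by rewrite A0 in_set0.
have [hH eh] := mem_above hA; have [hP hp] := mem_Hset hH.
have -> : pre e p by apply: pre_trans eh _; case/andP: hp.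
have -> /= : [forall q in Pset par1 par2 P p, ~~ pre e q] = false.
  by apply/negbTE/forall_inPn; exists h; rewrite ?inE ?hP ?hp ?eh.
by rewrite (card_above_Tset hA) add0n add1n.
Qed.

End AboveElement.

Lemma sum_fcount f (S : {set V1 * V2}) :
  \sum_(q in S) fcount par1 par2 f q = \sum_e #|[set q in S | pre e q]| * f e.
Proof.
rewrite /fcount; under eq_bigr do rewrite big_mkcond.
rewrite exchange_big /=; apply: eq_bigr => e _.
rewrite -big_mkcondr sum_nat_const; congr (_ * _).
by apply: eq_card => q; rewrite !inE.
Qed.

Lemma Fcond_Hset_Tset f : (forall e, f e != 0 -> fully par1 par2 e) ->
  Fcond par1 par2 f P p + \sum_(q in H) fcount par1 par2 f q =
  fcount par1 par2 f p + \sum_(q in Tset par1 par2 P p) fcount par1 par2 f q.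
Proof.
move=> f_full; rewrite !sum_fcount /Fcond /fcount.
rewrite (big_mkcond (fun e => [&& _, _ & _])) (big_mkcond (fun e => pre e p)) -!big_split /=.
apply: eq_bigr => e _; have [->|/f_full fe] := eqVneq (f e) 0.
  by rewrite !if_same !muln0.
by rewrite -!mulnbl -!mulnDl Fcond_pointwise.
Qed.

End Prefixes.

Import GRing.Theory.
Local Open Scope ring_scope.

Theorem theorem4
  (V1 V2 : finType) (r1 : V1) (r2 : V2) (par1 : V1 -> V1) (par2 : V2 -> V2)
  (T1 : rooted_tree r1 par1) (T2 : rooted_tree r2 par2) (h1 h2 : nat)
  (D1 : forall v, is_leaf par1 v -> has_depth r1 par1 v h1)
  (D2 : forall v, is_leaf par2 v -> has_depth r2 par2 v h2)
  (f : V1 * V2 -> nat)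
  (Sfull : forall e, (f e != 0)%N -> fully par1 par2 e)
  (P : {set V1 * V2}) (p : V1 * V2) :
  (Fcond par1 par2 f P p)%:Z =
    (fcount par1 par2 f p)%:Z
    - (\sum_(q in Hset par1 par2 P p) (fcount par1 par2 f q)%:Z)
    + (\sum_(q in Tset par1 par2 P p) (fcount par1 par2 f q)%:Z).
Proof.
have sum_Posz (S : {set V1 * V2}) :
    \sum_(q in S) (fcount par1 par2 f q)%:Z = (\sum_(q in S) fcount par1 par2 f q)%:Z.
  by rewrite (big_morph Posz PoszD (erefl 0%:Z)).
rewrite !sum_Posz addrAC -PoszD -(Fcond_Hset_Tset T1 T2 P p Sfull).
by rewrite PoszD addrK.
Qed.
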